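(* Let $\Gamma=\mathrm{SL}_2(\mathbb Z)$, $\Gamma_i=\langle\gamma_i\rangle$ with $\gamma_i=\begin{pmatrix}0&1\\-1&0\end{pmatrix}$, $\nu_{\mathbb H}\begin{pmatrix}a&b\\c&d\end{pmatrix}=a^2+b^2+c^2+d^2$, and for $\gamma=\begin{pmatrix}a&b\\c&d\end{pmatrix}$ let $z_1(\gamma)=(a+d)+i(b-c)$, $z_2(\gamma)=(a-d)-i(b+c)$. Let $n\ge2$ with $n\equiv3\bmod4$ and $$C_n=\{z_1\in\mathbb Z[i]: N(z_1)=n+2,\ z_1\text{ primary}\}\times\{z_2\in\mathbb Z[i]: N(z_2)=n-2,\ z_2\text{ primary}\}.$$ Then there exist unique representatives of the double cosets in $\Gamma_i\backslash\Gamma/\Gamma_i$ with $\nu_{\mathbb H}(\gamma)=n$ such that the map $\gamma\mapsto(z_1(\gamma),z_2(\gamma))$ from this set of representatives to $C_n$ is a bijection.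
   Context: $N(z)=z\bar z$; a Gaussian integer $w$ is primary if $w\equiv1\bmod(1+i)^3$. $\nu_{\mathbb H}$ is constant on double cosets $\Gamma_i\gamma\Gamma_i$. *)

From mathcomp Require Import all_boot all_order all_algebra.
Set Implicit Arguments. Unset Strict Implicit. Unset Printing Implicit Defensive.
Import Order.TTheory GRing.Theory Num.Theory.
Local Open Scope ring_scope.

Definition inSL2Z (g : 'M[int]_2) : Prop := \det g = 1.

Definition ma (g : 'M[int]_2) : int := g ord0 ord0.
Definition mb (g : 'M[int]_2) : int := g ord0 ord_max.
Definition mc (g : 'M[int]_2) : int := g ord_max ord0.
Definition md (g : 'M[int]_2) : int := g ord_max ord_max.

Definition gamma_i : 'M[int]_2 :=
  \matrix_(i < 2, j < 2) (if (i == ord0) && (j == ord_max) then 1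
                          else if (i == ord_max) && (j == ord0) then -1 else 0).

(* Gamma_i = <gamma_i>; gamma_i has finite order (4), so nat powers give the whole group *)
Definition in_Gamma_i (h : 'M[int]_2) : Prop := exists k : nat, h = gamma_i ^+ k.

Definition same_dcoset (g g' : 'M[int]_2) : Prop :=
  exists h1 h2, in_Gamma_i h1 /\ in_Gamma_i h2 /\ g' = h1 * g * h2.

Definition nuH (g : 'M[int]_2) : int :=
  ma g ^+ 2 + mb g ^+ 2 + mc g ^+ 2 + md g ^+ 2.

(* Gaussian integers x + i y as pairs (x, y) *)
Definition gauss := (int * int)%type.
Definition gmul (z w : gauss) : gauss := (z.1 * w.1 - z.2 * w.2, z.1 * w.2 + z.2 * w.1).
Definition gnorm (z : gauss) : int := z.1 ^+ 2 + z.2 ^+ 2.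
Definition gdvd (d z : gauss) : Prop := exists q : gauss, z = gmul d q.
Definition one_plus_i_cubed : gauss := gmul (1, 1) (gmul (1, 1) (1, 1)).
Definition primary (w : gauss) : Prop := gdvd one_plus_i_cubed (w.1 - 1, w.2).

Definition z1 (g : 'M[int]_2) : gauss := (ma g + md g, mb g - mc g).
Definition z2 (g : 'M[int]_2) : gauss := (ma g - md g, - (mb g + mc g)).

Definition in_Cn (n : int) (p : gauss * gauss) : Prop :=
  (gnorm p.1 = n + 2 /\ primary p.1) /\ (gnorm p.2 = n - 2 /\ primary p.2).

From Pilot Require Import Defs.
From mathcomp Require Import all_boot all_order all_algebra zify ring.
Import GRing.Theory.
Local Open Scope ring_scope.

(* For g = [[a, b], [c, d]], the pair (z1 g, z2 g) is an injective linear
   image of (a, b, c, d), it reaches exactly the pairs of Gaussian integers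
   congruent modulo 2, and N(z1 g) = nuH g + 2 det g, N(z2 g) = nuH g - 2 det g.
   Multiplying g by gamma_i on the left multiplies both z1 and z2 by i; on the
   right it multiplies z1 by i and z2 by -i.  When nuH g is odd both z's have
   odd norm, so each has exactly one primary associate; since Re z1 = a + d and
   Re z2 = a - d have the same parity, the two required powers of i are
   realised simultaneously by some gamma_i^k g gamma_i^l.  Hence every double
   coset contains exactly one g with z1 g and z2 g primary. *)

Lemma det_mx2 (g : 'M[int]_2) : \det g = ma g * md g - mb g * mc g.
Proof.
rewrite /ma /mb /mc /md (expand_det_row _ ord0) !big_ord_recl big_ord0.
rewrite /cofactor !det_mx11 !mxE /=.
have -> : lift (lift ord0 ord0) (0 : 'I_1) = ord0 :> 'I_2 by apply/val_inj.
have -> : lift ord0 (0 : 'I_1) = ord_max :> 'I_2 by apply/val_inj.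
rewrite /= expr0 expr1; ring.
Qed.

Lemma mulmx2E (A B : 'M[int]_2) i j :
  (A * B) i j = A i ord0 * B ord0 j + A i ord_max * B ord_max j.
Proof.
rewrite -mulmxE mxE !big_ord_recl big_ord0 addr0.
by have -> : lift ord0 (ord0 : 'I_1) = ord_max :> 'I_2 by apply/val_inj.
Qed.

Lemma ord2P (i : 'I_2) : i = ord0 \/ i = ord_max.
Proof. by case: i => -[|[|//]] ?; [left | right]; apply/val_inj. Qed.

Lemma z1z2_inj (g g' : 'M[int]_2) : (z1 g, z2 g) = (z1 g', z2 g') -> g = g'.
Proof.
rewrite /z1 /z2 /ma /mb /mc /md => -[? ? ? ?]; apply/matrixP => i j.
by case: (ord2P i) => ->; case: (ord2P j) => ->; lia.
Qed.

Lemma gnorm_z1 (g : 'M[int]_2) : Defs.gnorm (z1 g) = nuH g + 2 * \det g.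
Proof. by rewrite det_mx2 /Defs.gnorm /z1 /nuH /=; ring. Qed.

Lemma gnorm_z2 (g : 'M[int]_2) : Defs.gnorm (z2 g) = nuH g - 2 * \det g.
Proof. by rewrite det_mx2 /Defs.gnorm /z2 /nuH /=; ring. Qed.

Definition mx2 (a b c d : int) : 'M[int]_2 :=
  \matrix_(i, j) if i == ord0 then (if j == ord0 then a else b)
                 else (if j == ord0 then c else d).

Lemma exists_mx_z (w1 w2 : gauss) :
  (2 %| w1.1 + w2.1)%Z -> (2 %| w1.2 + w2.2)%Z ->
  exists g : 'M[int]_2, (z1 g, z2 g) = (w1, w2).
Proof.
case: w1 w2 => [x1 y1] [x2 y2] /= /dvdzP[s Hs] /dvdzP[t Ht].
exists (mx2 s (y1 - t) (- t) (s - x2)).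
by rewrite /z1 /z2 /ma /mb /mc /md !mxE /=; congr (_, _); congr (_, _); lia.
Qed.

Definition gmuli (w : gauss) : gauss := (- w.2, w.1).

Lemma z1_gamma_iMl (g : 'M[int]_2) : z1 (gamma_i * g) = gmuli (z1 g).
Proof. by rewrite /z1 /ma /mb /mc /md !mulmx2E !mxE /gmuli /=; congr (_, _); ring. Qed.

Lemma z2_gamma_iMl (g : 'M[int]_2) : z2 (gamma_i * g) = gmuli (z2 g).
Proof. by rewrite /z2 /ma /mb /mc /md !mulmx2E !mxE /gmuli /=; congr (_, _); ring. Qed.

Lemma z1_gamma_iMr (g : 'M[int]_2) : z1 (g * gamma_i) = gmuli (z1 g).
Proof. by rewrite /z1 /ma /mb /mc /md !mulmx2E !mxE /gmuli /=; congr (_, _); ring. Qed.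

Lemma z2_gamma_iMr (g : 'M[int]_2) : z2 (g * gamma_i) = iter 3 gmuli (z2 g).
Proof. by rewrite /z2 /ma /mb /mc /md !mulmx2E !mxE /gmuli /=; congr (_, _); ring. Qed.

Lemma iter_morph {S T : Type} {f : S -> T} {h : S -> S} {h' : T -> T} k :
  {morph f : x / h x >-> h' x} -> {morph f : x / iter k h x >-> iter k h' x}.
Proof. by move=> fh x; elim: k => //= k <-; rewrite fh. Qed.

Lemma dcosetE (k l : nat) (g : 'M[int]_2) :
  gamma_i ^+ k * g * gamma_i ^+ l = iter l (fun h => h * gamma_i) (iter k ( *%R gamma_i) g).
Proof. by rewrite iter_mulr; elim: l => [|l /= <-]; rewrite ?mulr1 // exprSr mulrA. Qed.

Lemma z1_dcoset (k l : nat) (g : 'M[int]_2) :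
  z1 (gamma_i ^+ k * g * gamma_i ^+ l) = iter (l + k) gmuli (z1 g).
Proof. by rewrite dcosetE !(iter_morph _ z1_gamma_iMr, iter_morph _ z1_gamma_iMl) iterD. Qed.

Lemma z2_dcoset (k l : nat) (g : 'M[int]_2) :
  z2 (gamma_i ^+ k * g * gamma_i ^+ l) = iter (l * 3 + k) gmuli (z2 g).
Proof.
by rewrite dcosetE !(iter_morph _ z2_gamma_iMr, iter_morph _ z2_gamma_iMl) iterD iterM.
Qed.

Lemma gnorm_iter_gmuli (k : nat) (w : gauss) : Defs.gnorm (iter k gmuli w) = Defs.gnorm w.
Proof. by elim: k => //= k <-; rewrite /Defs.gnorm /=; ring. Qed.

Lemma primaryE (x y : int) : primary (x, y) <-> (2 %| y)%Z /\ ((x + y) %% 4 = 1)%Z.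
Proof.
rewrite /primary /gdvd.
have -> : one_plus_i_cubed = (- (1 + 1), 1 + 1) by [].
rewrite /gmul /=; split.
- by case=> -[q1 q2] [? ?]; lia.
- move=> [/dvdzP[t ->] ?]; exists ((1 - x + 2 * t) %/ 4, (1 - x - 2 * t) %/ 4)%Z.
  by congr (_, _) => /=; lia.
Qed.

Lemma iter_gmuli_mod4 (k : nat) (w : gauss) : iter k gmuli w = iter (k %% 4) gmuli w.
Proof.
rewrite {1}(divn_eq k 4) addnC iterD iterM (iter_fix (k %/ 4)) //.
by case: w => x y; rewrite /gmuli /= !opprK.
Qed.

Lemma primary_iter_gmuli {k : nat} {w : gauss} :
  primary w -> primary (iter k gmuli w) -> iter k gmuli w = w.
Proof.
case: w => x y; rewrite iter_gmuli_mod4.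
have : (k %% 4 < 4)%N by rewrite ltn_mod.
case: (k %% 4)%N => [|[|[|[|//]]]] _ //; rewrite /gmuli /=.
all: by move=> /primaryE ? /primaryE ?; exfalso; lia.
Qed.

Lemma eq_primary_iter_gmuli {k k' : nat} {w : gauss} :
  primary (iter k gmuli w) -> primary (iter k' gmuli w) ->
  iter k gmuli w = iter k' gmuli w.
Proof.
have -> : iter k gmuli w = iter (k + 3 * k') gmuli (iter k' gmuli w).
  by rewrite -iterD iter_gmuli_mod4 [RHS]iter_gmuli_mod4; congr iter; lia.
by move=> Pk Pk'; exact: primary_iter_gmuli Pk' Pk.
Qed.

Lemma exists_primary_iter_gmuli {w : gauss} : (Defs.gnorm w %% 2 = 1)%Z ->
  exists m, [/\ (m < 4)%N, odd m = (2 %| w.1)%Z & primary (iter m gmuli w)].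
Proof.
case: w => x y; rewrite /Defs.gnorm /= => odd_norm.
have odd_xy : ((x + y) %% 2 = 1)%Z by nia.
have : ((2 %| y) /\ (x + y) %% 4 = 1 \/ (2 %| y) /\ (x + y) %% 4 = 3
        \/ (2 %| x) /\ (x - y) %% 4 = 1 \/ (2 %| x) /\ (x - y) %% 4 = 3)%Z by lia.
case=> [|[|[|]]] [? ?]; [exists 0%N | exists 2%N | exists 1%N | exists 3%N].
all: by split; rewrite /gmuli //= ?primaryE; lia.
Qed.

Lemma exists_primary_iter_gmuli_pair {w1 w2 : gauss} :
  (Defs.gnorm w1 %% 2 = 1)%Z -> (Defs.gnorm w2 %% 2 = 1)%Z -> (2 %| w1.1 - w2.1)%Z ->
  exists k l, primary (iter (l + k) gmuli w1) /\ primary (iter (l * 3 + k) gmuli w2).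
Proof.
move=> /exists_primary_iter_gmuli[m1 [m1_lt4 odd_m1 P1]].
move=> /exists_primary_iter_gmuli[m2 [m2_lt4 odd_m2 P2]] even_diff.
have odd_m12 : odd m1 = odd m2 by rewrite odd_m1 odd_m2; lia.
have [eq_m12 | ne_m12] := eqVneq m1 m2; first by subst m2; exists m1, 0%N.
(* m2 = m1 +- 2 by parity, so i^(m1+4) and i^(m1+6) are the required powers *)
exists (m1 + 3)%N, 1%N; rewrite !(iter_gmuli_mod4 (_ + _)).
have -> : ((1 + (m1 + 3)) %% 4 = m1)%N by lia.
by have -> : ((1 * 3 + (m1 + 3)) %% 4 = m2)%N by lia.
Qed.

Lemma same_dcosetP (g g' : 'M[int]_2) :
  same_dcoset g g' <-> exists k l : nat, g' = gamma_i ^+ k * g * gamma_i ^+ l.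
Proof.
split=> [[_ [_ [[k ->] [[l ->] ->]]]] | [k [l ->]]]; first by exists k, l.
by exists (gamma_i ^+ k), (gamma_i ^+ l); split; [exists k | split; [exists l |]].
Qed.

Lemma gnorm_z1_same_dcoset {g g' : 'M[int]_2} :
  same_dcoset g g' -> Defs.gnorm (z1 g') = Defs.gnorm (z1 g).
Proof. by case/same_dcosetP=> k [l ->]; rewrite z1_dcoset gnorm_iter_gmuli. Qed.

Lemma gnorm_z2_same_dcoset {g g' : 'M[int]_2} :
  same_dcoset g g' -> Defs.gnorm (z2 g') = Defs.gnorm (z2 g).
Proof. by case/same_dcosetP=> k [l ->]; rewrite z2_dcoset gnorm_iter_gmuli. Qed.

Lemma exists_same_dcoset_primary (g : 'M[int]_2) : (nuH g %% 2 = 1)%Z ->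
  exists g', [/\ same_dcoset g g', primary (z1 g') & primary (z2 g')].
Proof.
move=> odd_nu.
have odd_z1 : (Defs.gnorm (z1 g) %% 2 = 1)%Z by rewrite gnorm_z1; lia.
have odd_z2 : (Defs.gnorm (z2 g) %% 2 = 1)%Z by rewrite gnorm_z2; lia.
have even_re : (2 %| (z1 g).1 - (z2 g).1)%Z by rewrite /z1 /z2 /=; lia.
have [k [l [P1 P2]]] := exists_primary_iter_gmuli_pair odd_z1 odd_z2 even_re.
exists (gamma_i ^+ k * g * gamma_i ^+ l).
by rewrite z1_dcoset z2_dcoset; split=> //; apply/same_dcosetP; exists k, l.
Qed.

Lemma same_dcoset_primary_eq {g g1 g2 : 'M[int]_2} :
  same_dcoset g g1 -> same_dcoset g g2 ->
  primary (z1 g1) -> primary (z2 g1) -> primary (z1 g2) -> primary (z2 g2) -> g1 = g2.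
Proof.
case/same_dcosetP=> k1 [l1 ->]; case/same_dcosetP=> k2 [l2 ->].
rewrite !z1_dcoset !z2_dcoset => P1 Q1 P2 Q2; apply: z1z2_inj.
by rewrite !z1_dcoset !z2_dcoset (eq_primary_iter_gmuli P1 P2) (eq_primary_iter_gmuli Q1 Q2).
Qed.

Theorem lemma3p5 (n : int) (hn2 : 2 <= n) (hn4 : (n %% 4)%Z = 3) :
  (forall g : 'M[int]_2, inSL2Z g -> nuH g = n ->
     exists g', (same_dcoset g g' /\ in_Cn n (z1 g', z2 g')) /\
       forall g'', same_dcoset g g'' -> in_Cn n (z1 g'', z2 g'') -> g'' = g')
  /\ (forall g g' : 'M[int]_2, inSL2Z g -> inSL2Z g' -> nuH g = n -> nuH g' = n ->
        in_Cn n (z1 g, z2 g) -> in_Cn n (z1 g', z2 g') ->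
        (z1 g, z2 g) = (z1 g', z2 g') -> g = g')
  /\ (forall p : gauss * gauss, in_Cn n p ->
        exists g : 'M[int]_2, [/\ inSL2Z g, nuH g = n & (z1 g, z2 g) = p]).
Proof.
split; [|split].
- move=> g g_SL nu_g; have [|g' [gg' P1 P2]] := exists_same_dcoset_primary g.
    by rewrite nu_g; lia.
  exists g'; split.
    split=> //; rewrite /in_Cn /= (gnorm_z1_same_dcoset gg') (gnorm_z2_same_dcoset gg').
    by rewrite gnorm_z1 gnorm_z2 g_SL nu_g mulr1.
  by move=> g'' gg'' [[_ P1''] [_ P2'']]; apply: same_dcoset_primary_eq gg'' gg' _ _ P1 P2.
- by move=> g g' _ _ _ _ _ _; apply: z1z2_inj.
- case=> w1 w2 [[N1 P1] [N2 P2]] /=.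
  have [g Eg] : exists g, (z1 g, z2 g) = (w1, w2).
    by apply: exists_mx_z; case: w1 w2 {N1 N2} P1 P2 => [x1 y1] [x2 y2]
      /primaryE ? /primaryE ? /=; lia.
  have := gnorm_z1 g; have := gnorm_z2 g; case: (Eg) => -> ->; rewrite N1 N2.
  (* lia only recognises [\det g] once it is seen at type [int] *)
  by rewrite /inSL2Z; set d : int := \det g => ? ?; exists g; split=> //; lia.
Qed.
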